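(* Let $k\ge 2$, $n = 2k+1$, and let $A=(a_{ij})$ be an $n\times n$ matrix of the following form: $a_{i+1,i}=s$ for $1\le i\le n-1$ and $a_{ij}=0$ for $i>j+1$; $a_{1j}=t$ for $1\le j\le k$, $a_{1j}=0$ for $k+1\le j\le 2k$, $a_{1n}=t$; for $2\le i\le k+1$: $a_{ij}=t$ for $k+1\le j\le 2k$ and $a_{in}=0$; for $k+2\le i\le n$: $a_{in}=t$; and the remaining (''free'') entries $a_{ij}$ with $2\le i\le j\le k$ or $k+2\le i\le j\le 2k$ each lie in $\{0,t\}$. If at least one free entry equals $t$, then, viewing $\det A$ as a polynomial in the indeterminates $s$ and $t$, the coefficient of the monomial $s^{n-4}t^4$ in $\det A$ is nonzero.
   Context: Every entry of $A$ is $0$, $s$ or $t$, so $\det A$ is a polynomial in $s,t$ with integer coefficients. *)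

From mathcomp Require Import all_boot all_order all_algebra.
Set Implicit Arguments. Unset Strict Implicit. Unset Printing Implicit Defensive.
Import GRing.Theory.
Local Open Scope ring_scope.

(* Polynomials in two indeterminates s, t with integer coefficients are
   represented as {poly {poly int}}: the outer variable is s, the inner one t. *)
Definition PST := {poly {poly int}}.
Definition var_s : PST := 'X.
Definition var_t : PST := ('X)%:P.

Definition coef_st (p : PST) (a b : nat) : int := (p`_a)`_b.

(* Indices are 0-based ordinals; I = i+1 and J = j+1 are the paper's 1-based
   indices, n = 2k+1. *)
Definition free_pos (k I J : nat) : bool :=
  ((2 <= I) && (I <= J) && (J <= k))%N ||
  ((k.+2 <= I) && (I <= J) && (J <= 2 * k))%N.

Definition special_form (k : nat) (A : 'M[PST]_((2 * k).+1)) : Prop :=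
  forall i j : 'I_((2 * k).+1),
    let I := i.+1 in let J := j.+1 in let n := (2 * k).+1 in
    ((I == J.+1)%N -> A i j = var_s) /\
    ((J.+1 < I)%N -> A i j = 0) /\
    ((I == 1)%N -> (J <= k)%N -> A i j = var_t) /\
    ((I == 1)%N -> (k.+1 <= J <= 2 * k)%N -> A i j = 0) /\
    ((I == 1)%N -> (J == n)%N -> A i j = var_t) /\
    ((2 <= I <= k.+1)%N -> (k.+1 <= J <= 2 * k)%N -> A i j = var_t) /\
    ((2 <= I <= k.+1)%N -> (J == n)%N -> A i j = 0) /\
    ((k.+2 <= I)%N -> (J == n)%N -> A i j = var_t) /\
    (free_pos k I J -> A i j = 0 \/ A i j = var_t).

(* Expanding a Hessenberg determinant with subdiagonal [s] along its first
   column expresses it as a sum over the ways of cutting the diagonal into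
   consecutive blocks, a block [[p, c)] contributing [(-s)^(c-1-p)] times its
   top-right entry [a_(p,c-1)].  In [A] every such entry on or above the
   diagonal is [0] or [t], so after the substitution [s := -s] all terms have
   nonnegative coefficients and nothing cancels: the coefficient of
   [s^(n-4) t^4] is, up to sign, the number of cuttings into four blocks whose
   corners are all [t].  One such cutting exists: a block whose corner is the
   free entry [t], completed by three blocks whose corners lie in the first
   row, in the band [2 <= i <= k+1, k+1 <= j <= 2k], or in the last column. *)

From mathcomp Require Import all_boot all_order all_algebra.
From mathcomp Require Import zify.

Set Implicit Arguments.
Unset Strict Implicit.
Unset Printing Implicit Defensive.

Import Order.TTheory GRing.Theory Num.Theory.
Local Open Scope ring_scope.

Section HessenbergDeterminant.
Variable R : comNzRingType.

Definition block_det (g : nat -> nat -> R) (p m : nat) : R :=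
  \det (\matrix_(i, j < m) g (p + i)%N (p + j)%N).

Variable s : R.

Lemma block_det0_expand m (g : nat -> nat -> R) :
  (forall i, g i.+1 i = s) -> (forall i j, (j.+1 < i)%N -> g i j = 0) ->
  block_det g 0 m.+1 =
  \sum_(q < m.+1) (-s) ^+ q * g 0%N q * block_det g q.+1 (m - q).
Proof.
elim: m g => [|m IH] g g_subdiag g_lower.
  by rewrite big_ord1 /block_det det_mx11 det_mx00 !mxE expr0 mul1r mulr1.
rewrite /block_det (expand_det_col _ ord0) big_ord_recl big_ord_recl big1; last first.
  by move=> i _; rewrite !mxE /= g_lower ?mul0r.
rewrite /cofactor !mxE /= expr0 mul1r g_subdiag addr0 [RHS]big_ord_recl mul1r.
congr (_ + _); first by congr (_ * \det _); apply/matrixP => i j; rewrite !mxE.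
(* deleting the second row and first column leaves a Hessenberg matrix whose
   first row is that of the original *)
pose g' i j := g (if i == 0%N then 0%N else i.+1) j.+1.
have -> : row' (lift ord0 ord0) (col' ord0 (\matrix_(i, j < m.+2) g (0 + i)%N (0 + j)%N))
    = \matrix_(i, j < m.+1) g' (0 + i)%N (0 + j)%N.
  by apply/matrixP => -[[|i] hi] j; rewrite !mxE.
rewrite -/(block_det g' 0 m.+1) (IH g') => [|i|[|i] j //= hij];
  rewrite /g' /= ?g_subdiag ?g_lower //.
rewrite expr1 mulN1r mulrN -mulNr mulr_sumr; apply: eq_bigr => q _.
by rewrite /bump /= exprS !mulrA; congr (_ * \det _).
Qed.

Lemma block_det_expand (g : nat -> nat -> R) p m :
  (forall i, g i.+1 i = s) -> (forall i j, (j.+1 < i)%N -> g i j = 0) ->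
  block_det g p m.+1 =
  \sum_(q < m.+1) (-s) ^+ q * g p (p + q)%N * block_det g (p + q.+1) (m - q).
Proof.
move=> g_subdiag g_lower.
pose gp i j := g (p + i)%N (p + j)%N.
have -> : block_det g p m.+1 = block_det gp 0 m.+1 by [].
rewrite block_det0_expand => [|i|i j hij];
  rewrite /gp ?addnS ?g_subdiag ?g_lower //; last by lia.
apply: eq_bigr => q _; rewrite addn0; congr (_ * \det _).
by apply/matrixP => i j; rewrite !mxE !addnA.
Qed.

End HessenbergDeterminant.

Section HessenbergExtension.
Variables (R : comNzRingType) (s : R) (n : nat) (A : 'M[R]_n.+1).

(* [A] read as a function on [nat * nat], continued outside the square by [s] on
   the subdiagonal and [0] elsewhere, so that it stays Hessenberg. *)
Definition hess_ext (i j : nat) : R :=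
  if (i < n.+1)%N && (j < n.+1)%N then A (inord i) (inord j)
  else if i == j.+1 then s else 0.

Lemma hess_ext_ord (i j : 'I_n.+1) : hess_ext i j = A i j.
Proof. by rewrite /hess_ext !ltn_ord !inord_val. Qed.

Lemma block_det_hess_ext : block_det hess_ext 0 n.+1 = \det A.
Proof. by congr (\det _); apply/matrixP => i j; rewrite mxE hess_ext_ord. Qed.

Hypothesis A_subdiag : forall i j : 'I_n.+1, i = j.+1 :> nat -> A i j = s.
Hypothesis A_lower : forall i j : 'I_n.+1, (j.+1 < i)%N -> A i j = 0.

Lemma hess_ext_subdiag i : hess_ext i.+1 i = s.
Proof.
rewrite /hess_ext eqxx; case: ifP => // /andP[hi1 hi].
by rewrite A_subdiag // !inordK.
Qed.

Lemma hess_ext_lower i j : (j.+1 < i)%N -> hess_ext i j = 0.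
Proof.
move=> hij; rewrite /hess_ext; case: ifP => [/andP[hi hj]|_].
  by rewrite A_lower // !inordK.
by have -> : (i == j.+1) = false by lia.
Qed.

End HessenbergExtension.

(* The coefficient of [s^a t^b] in [p(-s, t)]: the determinants below expand
   with signs [(-s)^q], so their coefficients alternate in the degree of [s]. *)
Definition alt_coef (p : PST) (a b : nat) : int := (-1) ^+ a * coef_st p a b.

Definition alt_nonneg (p : PST) : Prop := forall a b, 0 <= alt_coef p a b.

Lemma alt_coef1 a b : alt_coef 1 a b = ((a == 0) && (b == 0))%:R.
Proof.
rewrite /alt_coef /coef_st coef1; case: a => [|a] /=; last by rewrite coef0 mulr0.
by rewrite coef1 mul1r.
Qed.

Lemma alt_coef_sum (I : finType) (F : I -> PST) a b :
  alt_coef (\sum_i F i) a b = \sum_i alt_coef (F i) a b.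
Proof. by rewrite /alt_coef /coef_st !coef_sum mulr_sumr. Qed.

Lemma alt_coef_tM p a b :
  alt_coef (var_t * p) a b = if b is b'.+1 then alt_coef p a b' else 0.
Proof. by rewrite /alt_coef /coef_st coefCM coefXM; case: b => [|b]; rewrite ?mulr0. Qed.

Lemma alt_coef_NsM p a b :
  alt_coef (- var_s * p) a b = if a is a'.+1 then alt_coef p a' b else 0.
Proof.
rewrite /alt_coef /coef_st mulNr coefN coefXM.
case: a => [|a] /=; first by rewrite oppr0 coef0 mulr0.
by rewrite coefN exprS mulN1r mulrNN.
Qed.

Lemma alt_coef_NsXM q p a b :
  alt_coef ((- var_s) ^+ q * p) (q + a) b = alt_coef p a b.
Proof. by elim: q => [|q IH]; rewrite ?expr0 ?mul1r // exprS -mulrA alt_coef_NsM. Qed.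

Lemma alt_nonneg1 : alt_nonneg 1.
Proof. by move=> a b; rewrite alt_coef1 ler0n. Qed.

Lemma alt_nonneg_sum (I : finType) (F : I -> PST) :
  (forall i, alt_nonneg (F i)) -> alt_nonneg (\sum_i F i).
Proof.
by move=> F_nonneg a b; rewrite alt_coef_sum; apply: sumr_ge0 => i _; apply: F_nonneg.
Qed.

Lemma alt_nonneg_tM p : alt_nonneg p -> alt_nonneg (var_t * p).
Proof. by move=> p_nonneg a [|b]; rewrite alt_coef_tM. Qed.

Lemma alt_nonneg_NsXM q p : alt_nonneg p -> alt_nonneg ((- var_s) ^+ q * p).
Proof.
elim: q => [|q IH] p_nonneg; first by rewrite expr0 mul1r.
by move=> [|a] b; rewrite exprS -mulrA alt_coef_NsM ?IH.
Qed.

Section HessenbergCoefficients.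
Variable g : nat -> nat -> PST.
Hypothesis g_subdiag : forall i, g i.+1 i = var_s.
Hypothesis g_lower : forall i j, (j.+1 < i)%N -> g i j = 0.
Hypothesis g_upper : forall i j, (i <= j)%N -> g i j = 0 \/ g i j = var_t.

Lemma alt_nonneg_expansion_term p q m :
  alt_nonneg (block_det g (p + q.+1) m) ->
  alt_nonneg ((- var_s) ^+ q * g p (p + q)%N * block_det g (p + q.+1) m).
Proof.
move=> det_nonneg; rewrite -mulrA; apply: alt_nonneg_NsXM.
have [->|->] := g_upper (leq_addr q p); last exact: alt_nonneg_tM.
by move=> a b; rewrite mul0r /alt_coef /coef_st !coef0 mulr0.
Qed.

Lemma alt_nonneg_block_det p m : alt_nonneg (block_det g p m).
Proof.
elim/ltn_ind: m p => -[|m] IH p; first by rewrite /block_det det_mx00; exact: alt_nonneg1.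
rewrite (block_det_expand _ _ g_subdiag g_lower); apply: alt_nonneg_sum => q.
by apply: alt_nonneg_expansion_term; apply: IH; rewrite ltnS leq_subr.
Qed.

(* The block [[p, c)] with [t] in its corner contributes [(-s)^(c-1-p) t] times
   the complementary minor, and all other terms of the expansion are
   nonnegative. *)
Lemma alt_coef_block_det_ge p c m a b :
  (p < c <= p + m)%N -> g p c.-1 = var_t ->
  alt_coef (block_det g c (p + m - c)) a b <=
  alt_coef (block_det g p m) (c.-1 - p + a) b.+1.
Proof.
case: m => [|m] lt_pcm g_t; first by lia.
have lt_qm : (c.-1 - p < m.+1)%N by lia.
rewrite (block_det_expand _ _ g_subdiag g_lower) [X in _ <= X]alt_coef_sum.
rewrite (bigD1 (Ordinal lt_qm)) // -mulrA.
have -> : (p + (c.-1 - p) = c.-1)%N by lia.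
have -> : (p + (c.-1 - p).+1 = c)%N by lia.
have -> : (m - (c.-1 - p) = p + m.+1 - c)%N by lia.
rewrite g_t alt_coef_NsXM alt_coef_tM lerDl.
apply: sumr_ge0 => i _; apply: alt_nonneg_expansion_term; exact: alt_nonneg_block_det.
Qed.

(* [t_chain p cs] with [cs = [:: c1; ...; cr]]: the diagonal blocks
   [[p, c1), [c1, c2), ..., [c(r-1), cr)] all carry [t] in their top-right
   corner. *)
Fixpoint t_chain (p : nat) (cs : seq nat) : Prop :=
  if cs is c :: cs' then [/\ (p < c)%N, g p c.-1 = var_t & t_chain c cs']
  else True.

Lemma t_chain_size p cs : t_chain p cs -> (p + size cs <= last p cs)%N.
Proof.
elim: cs p => [|c cs IH] p /=; first by rewrite addn0.
by case=> lt_pc _ /IH; lia.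
Qed.

Lemma alt_coef_block_det_chain p m cs :
  last p cs = (p + m)%N -> t_chain p cs ->
  1 <= alt_coef (block_det g p m) (m - size cs) (size cs).
Proof.
elim: cs p m => [|c cs IH] p m /= last_cs.
  have -> : m = 0%N by lia.
  by rewrite /block_det det_mx00 alt_coef1.
case=> lt_pc g_t chain; have := t_chain_size chain; rewrite last_cs => size_cs.
apply: le_trans (IH c (p + m - c)%N _ chain) _; first by rewrite last_cs; lia.
have -> : (m - (size cs).+1 = c.-1 - p + (p + m - c - size cs))%N by lia.
by apply: alt_coef_block_det_ge; rewrite ?g_t //; lia.
Qed.

End HessenbergCoefficients.

Section SpecialForm.
Variables (k : nat) (A : 'M[PST]_((2 * k).+1)).
Hypothesis A_special : special_form A.

Lemma special_form_subdiag (i j : 'I_(2 * k).+1) : i = j.+1 :> nat -> A i j = var_s.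
Proof. by move=> /eqP ij; have [->] := A_special i j. Qed.

Lemma special_form_lower (i j : 'I_(2 * k).+1) : (j.+1 < i)%N -> A i j = 0.
Proof. by move=> lt_ji; have [_ [->]] := A_special i j. Qed.

Let g := hess_ext var_s A.

Lemma special_form_upper i j : (i <= j)%N -> g i j = 0 \/ g i j = var_t.
Proof.
move=> le_ij; rewrite /g /hess_ext; case: ifP => [/andP[hi hj]|_]; last first.
  by left; have -> : (i == j.+1) = false by lia.
have := A_special (inord i) (inord j); rewrite /= !inordK // /free_pos.
case=> _ [_ [row0_t [row0_0 [corner_t [band_t [band_0 [col_t free]]]]]]].
have [i0|i_gt0] := posnP i.
  case: (ltnP j k) => [lt_jk|le_kj]; first by right; apply: row0_t; lia.
  case: (ltnP j (2 * k)) => [lt_j2k|ge_j2k]; first by left; apply: row0_0; lia.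
  by right; apply: corner_t; lia.
case: (leqP i k) => [le_ik|lt_ki].
  case: (ltnP j k) => [lt_jk|le_kj]; first by apply: free; lia.
  case: (ltnP j (2 * k)) => [lt_j2k|ge_j2k]; first by right; apply: band_t; lia.
  by left; apply: band_0; lia.
case: (ltnP j (2 * k)) => [lt_j2k|ge_j2k]; first by apply: free; lia.
by right; apply: col_t; lia.
Qed.

Lemma special_form_forced_t i j :
  (i <= j)%N ->
  [|| (i == 0) && (j < k), (0 < i <= k) && (k <= j < 2 * k)
    | (k < i) && (j == 2 * k)]%N ->
  g i j = var_t.
Proof.
move=> le_ij regions; have hj : (j < (2 * k).+1)%N by lia.
rewrite /g /hess_ext ifT; last by apply/andP; split; lia.
have := A_special (inord i) (inord j); rewrite /= !inordK //; last by lia.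
case=> _ [_ [row0_t [_ [_ [band_t [_ [col_t _]]]]]]].
case/or3P: regions => [/andP[/eqP i0 lt_jk]|/andP[i_band j_band]|/andP[lt_ki /eqP j2k]].
- by apply: row0_t; lia.
- by apply: band_t; lia.
- by apply: col_t; lia.
Qed.

End SpecialForm.

Theorem proposition5p8 (k : nat) (hk : (2 <= k)%N)
    (A : 'M[PST]_((2 * k).+1)) :
  special_form A ->
  (exists i j : 'I_((2 * k).+1), free_pos k i.+1 j.+1 /\ A i j = var_t) ->
  coef_st (\det A) ((2 * k).+1 - 4) 4 != 0.
Proof.
move=> A_special [i0 [j0 [free_ij A_t]]].
have g_subdiag := hess_ext_subdiag (special_form_subdiag A_special).
have g_lower := hess_ext_lower var_s (special_form_lower A_special).
have g_upper := special_form_upper A_special.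
have g_t := special_form_forced_t A_special.
have g_free : hess_ext var_s A i0 j0 = var_t by rewrite hess_ext_ord.
suff : 1 <= alt_coef (\det A) ((2 * k).+1 - 4) 4.
  by apply: contraTneq; rewrite /alt_coef => ->; rewrite mulr0.
rewrite -(block_det_hess_ext var_s).
(* one block around the free entry [t], three blocks with forced corners [t] *)
case/orP: free_ij => free_ij.
- apply: (alt_coef_block_det_chain g_subdiag g_lower g_upper
    (cs := [:: i0 : nat; j0.+1; 2 * k; (2 * k).+1])) => //=.
  by do ![lia | exact: g_free | apply: g_t; lia | split].
- apply: (alt_coef_block_det_chain g_subdiag g_lower g_upper
    (cs := [:: 1%N; i0 : nat; j0.+1; (2 * k).+1])) => //=.
  by do ![lia | exact: g_free | apply: g_t; lia | split].
Qed.
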